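(* Let $G=(A\cup B,E)$ be a bipartite graph with orderings $\sigma_A=(a_1,\ldots,a_n)$ of $A$ and $\sigma_B=(b_1,\ldots,b_m)$ of $B$, and let $M$ be the ordered bipartite adjacency matrix with rows $a_1,\ldots,a_n$, columns $b_1,\ldots,b_m$, and entry $m_{i,p}=1$ if $a_ib_p\in E$ and $0$ otherwise. Then $G$ admits a Stick representation respecting $\sigma_A$ and $\sigma_B$ if and only if $M$ contains none of the following ordered submatrices (where $*$ denotes an arbitrary entry $0$ or $1$): (P1) rows $i<j<k$ and columns $p<q<r$ with $m_{i,q}=1$, $m_{j,q}=0$, $m_{j,r}=1$, $m_{k,p}=1$; (P2) rows $i<j<k$ and columns $p<q$ with $m_{i,p}=1$, $m_{j,p}=0$, $m_{j,q}=1$, $m_{k,p}=1$; (P3) rows $i<j$ and columns $p<q<r$ with $m_{i,q}=1$, $m_{j,p}=1$, $m_{j,q}=0$, $m_{j,r}=1$. That is, the forbidden patterns are $P_1=\begin{bmatrix} * & 1 & * \\ * & 0 & 1 \\ 1 & * & * \end{bmatrix}$, $P_2=\begin{bmatrix} 1 & * \\ 0 & 1 \\ 1 & * \end{bmatrix}$, $P_3=\begin{bmatrix} * & 1 & * \\ 1 & 0 & 1 \end{bmatrix}$, with rows and columns taken in the given order.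
   Context: A Stick representation of a bipartite graph $G=(A\cup B,E)$ (with $A$ horizontal and $B$ vertical) assigns to each vertex of $A$ a horizontal segment and to each vertex of $B$ a vertical segment such that the left endpoints of all horizontal segments and the bottom endpoints of all vertical segments lie on a fixed ground line $\ell$ of slope $-1$, and a horizontal and a vertical segment intersect if and only if the corresponding vertices are adjacent in $G$. The representation respects $\sigma_A$ and $\sigma_B$ if, ordering the points where segments touch $\ell$ from left to right, the $i$th horizontal segment corresponds to the $i$th vertex of $\sigma_A$ and the $j$th vertical segment corresponds to the $j$th vertex of $\sigma_B$. An ordered submatrix uses a subset of rows and a subset of columns in their original relative order. *)

From mathcomp Require Import all_boot.
From Stdlib Require Import Reals.
Set Implicit Arguments. Unset Strict Implicit. Unset Printing Implicit Defensive.

(* An ordered bipartite graph: A = {a_0,...,a_(n-1)} in the order sigma_A,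
   B = {b_0,...,b_(m-1)} in the order sigma_B, and adj i p <-> a_i b_p in E.
   The ordered bipartite adjacency matrix is M = \matrix_(i,p) adj i p. *)

(* Ground line l : { (t, -t) | t in R }, slope -1; "left to right" along l
   means increasing first coordinate t. *)

Definition hseg (x h : R) : R * R -> Prop :=
  fun P => P.2 = (- x)%R /\ (x <= P.1 <= x + h)%R.

Definition vseg (y v : R) : R * R -> Prop :=
  fun P => P.1 = y /\ (- y <= P.2 <= - y + v)%R.

Definition seg_meet (S T : R * R -> Prop) : Prop := exists P, S P /\ T P.

Definition stick_rep_respecting (n m : nat) (adj : 'I_n -> 'I_m -> bool) : Prop :=
  exists (x h : 'I_n -> R) (y v : 'I_m -> R),
    (forall i j : 'I_n, (i < j)%N -> (x i < x j)%R) /\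
    (forall p q : 'I_m, (p < q)%N -> (y p < y q)%R) /\
    (forall (i : 'I_n) (p : 'I_m), x i <> y p) /\
    (forall i, (0 < h i)%R) /\ (forall p, (0 < v p)%R) /\
    (forall i p, adj i p <-> seg_meet (hseg (x i) (h i)) (vseg (y p) (v p))).

Definition has_P1 (n m : nat) (adj : 'I_n -> 'I_m -> bool) : Prop :=
  exists (i j k : 'I_n) (p q r : 'I_m),
    [/\ (i < j < k)%N, (p < q < r)%N &
        [/\ adj i q, ~~ adj j q, adj j r & adj k p]].

Definition has_P2 (n m : nat) (adj : 'I_n -> 'I_m -> bool) : Prop :=
  exists (i j k : 'I_n) (p q : 'I_m),
    [/\ (i < j < k)%N, (p < q)%N &
        [/\ adj i p, ~~ adj j p, adj j q & adj k p]].

Definition has_P3 (n m : nat) (adj : 'I_n -> 'I_m -> bool) : Prop :=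
  exists (i j : 'I_n) (p q r : 'I_m),
    [/\ (i < j)%N, (p < q < r)%N &
        [/\ adj i q, adj j p, ~~ adj j q & adj j r]].

(* A Stick representation is determined by the positions of the feet on the
   ground line and the lengths of the sticks: a_i meets b_p exactly when the
   foot of a_i lies left of that of b_p and both sticks are at least as long
   as the distance between the feet.  This makes every pattern impossible:
   if a_i meets b_q and a_j meets b_r, with the feet ordered
   x_i <= x_j <= y_q <= y_r, then a_j also meets b_q.

   Conversely, place the foot of row i at (m+1) i and the foot of column p
   immediately after the foot of the last row having a 1 in a column <= p,
   and make each stick as long as its farthest neighbour requires.  If a_i
   and b_p then meet without being adjacent, a farther neighbour b_q of a_i
   (q > p), a higher neighbour a_j of b_p (j < i) and the last row k >= i
   with a 1 in a column r <= p form one of P1, P2 (k > i, r = p) or P3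
   (k = i). *)
From mathcomp Require Import all_boot zify.
From Stdlib Require Import Reals Lra.

Set Implicit Arguments.
Unset Strict Implicit.

Lemma seg_meetE (x h y v : R) :
  seg_meet (hseg x h) (vseg y v) <-> (x <= y /\ y - x <= h /\ y - x <= v)%R.
Proof.
split=> [[[a b] [[/= eb ?] [/= ea ?]]] | ?]; first by subst; lra.
by exists (y, (- x)%R); rewrite /hseg /vseg /=; lra.
Qed.

Lemma seg_meet_inner (xi hi xj hj yq vq yr vr : R) :
  (xi <= xj <= yq)%R -> (yq <= yr)%R ->
  seg_meet (hseg xi hi) (vseg yq vq) -> seg_meet (hseg xj hj) (vseg yr vr) ->
  seg_meet (hseg xj hj) (vseg yq vq).
Proof. by rewrite !seg_meetE; lra. Qed.

Lemma INR_sub_le_add_half (a b c : nat) : (a <= b)%N ->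
  (INR b - INR a <= INR c + /2)%R <-> (b - a <= c)%N.
Proof.
move=> /subnKC; move: (b - a) => d <-; rewrite plus_INR.
split=> [le_dc | /leP/le_INR]; last lra.
by rewrite leqNgt; apply/negP => /leP/le_INR; rewrite S_INR; lra.
Qed.

Lemma bigmax_witness (I : finType) (P : pred I) (F : I -> nat) :
  (0 < \max_(i | P i) F i)%N -> exists2 i, P i & \max_(i | P i) F i = F i.
Proof.
case: (pickP P) => [i0 Pi0 _ | P0]; last by rewrite big_pred0.
by rewrite (bigmax_eq_arg i0 Pi0); case: arg_maxnP => // i Pi _; exists i.
Qed.

Section StickRepresentation.
Variables (n m : nat) (adj : 'I_n -> 'I_m -> bool).

Lemma stick_rep_patterns_free :
  stick_rep_respecting adj -> ~ has_P1 adj /\ ~ has_P2 adj /\ ~ has_P3 adj.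
Proof.
move=> [x [h [y [v [lt_x [lt_y [_ [_ [_ adjE]]]]]]]]].
have foot i p : adj i p -> (x i <= y p)%R by move/adjE/seg_meetE; lra.
have inner (i j : 'I_n) (q r : 'I_m) :
    (i < j)%N -> (x j <= y q)%R -> (q < r)%N -> adj i q -> adj j r -> adj j q.
  move=> /lt_x ij jq /lt_y qr /adjE iq /adjE jr; apply/adjE.
  by apply: seg_meet_inner iq jr; lra.
split; [|split].
- move=> [i [j [k [p [q [r [/andP[ij jk] /andP[pq qr] [iq njq jr kp]]]]]]]].
  apply: (negP njq); apply: (inner _ _ _ _ ij _ qr iq jr).
  by have := lt_x _ _ jk; have := lt_y _ _ pq; have := foot _ _ kp; lra.
- move=> [i [j [k [p [q [/andP[ij jk] pq [ip njp jq kp]]]]]]].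
  apply: (negP njp); apply: (inner _ _ _ _ ij _ pq ip jq).
  by have := lt_x _ _ jk; have := foot _ _ kp; lra.
- move=> [i [j [p [q [r [ij /andP[pq qr] [iq jp njq jr]]]]]]].
  apply: (negP njq); apply: (inner _ _ _ _ ij _ qr iq jr).
  by have := lt_y _ _ pq; have := foot _ _ jp; lra.
Qed.

Lemma stick_rep_of_nat_layout (X : 'I_n -> nat) (Y : 'I_m -> nat)
    (H : 'I_n -> nat) (V : 'I_m -> nat) :
  (forall i j : 'I_n, (i < j)%N -> (X i < X j)%N) ->
  (forall p q : 'I_m, (p < q)%N -> (Y p < Y q)%N) ->
  (forall i p, X i != Y p) ->
  (forall i p, adj i p <->
     [/\ (X i < Y p)%N, (Y p - X i <= H i)%N & (Y p - X i <= V p)%N]) ->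
  stick_rep_respecting adj.
Proof.
move=> lt_X lt_Y neq_XY adjE.
(* Feet are at integer distances, so the extra 1/2 makes every stick positive
   without creating new intersections. *)
exists (fun i => INR (X i)), (fun i => INR (H i) + /2)%R.
exists (fun p => INR (Y p)), (fun p => INR (V p) + /2)%R.
split; [|split; [|split; [|split; [|split]]]].
- by move=> i j /lt_X/ltP/lt_INR.
- by move=> p q /lt_Y/ltP/lt_INR.
- by move=> i p /INR_eq/eqP; rewrite (negbTE (neq_XY i p)).
- by move=> i; have := pos_INR (H i); lra.
- by move=> p; have := pos_INR (V p); lra.
move=> i p; rewrite seg_meetE adjE.
have lt_XY : (INR (X i) <= INR (Y p))%R <-> (X i < Y p)%N.
  split=> [/INR_le/leP | /ltP/lt_INR]; last lra.
  by rewrite leq_eqVlt (negbTE (neq_XY i p)).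
split=> [[ip le_H le_V] | [/lt_XY ip [le_H le_V]]]; have le_ip := ltnW ip.
- by split; [exact/lt_XY | split; exact/INR_sub_le_add_half].
- by split=> //; exact/(INR_sub_le_add_half _ le_ip).
Qed.

Lemma nonedge_pattern (i j k : 'I_n) (p q r : 'I_m) :
  ~~ adj i p -> (j < i)%N -> adj j p -> (p < q)%N -> adj i q ->
  (i <= k)%N -> adj k r -> (r <= p)%N ->
  has_P1 adj \/ has_P2 adj \/ has_P3 adj.
Proof.
move=> nip ji jp pq iq ik kr rp.
have [lt_ik | le_ki] := ltnP i k.
  have [lt_rp | le_pr] := ltnP r p.
    by left; exists j, i, k, r, p, q; split=> //; apply/andP.
  have er : r = p by apply/val_inj/anti_leq; rewrite rp le_pr.
  by subst r; right; left; exists j, i, k, p, q; split=> //; apply/andP.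
have ek : k = i by apply/val_inj/anti_leq; rewrite ik le_ki.
subst k; have [lt_rp | le_pr] := ltnP r p.
  by right; right; exists j, i, r, p, q; split=> //; apply/andP.
have er : r = p by apply/val_inj/anti_leq; rewrite rp le_pr.
by subst r; rewrite kr in nip.
Qed.

(* [last_row p] is 0 when no column <= p has a 1. *)
Definition last_row (p : 'I_m) : nat :=
  \max_(kr : 'I_n * 'I_m | (kr.2 <= p)%N && adj kr.1 kr.2) kr.1.

Definition hfoot (i : 'I_n) : nat := m.+1 * i.
Definition vfoot (p : 'I_m) : nat := m.+1 * last_row p + p + 1.
Definition hlen (i : 'I_n) : nat := \max_(q | adj i q) (vfoot q - hfoot i).
Definition vlen (p : 'I_m) : nat := \max_(i | adj i p) (vfoot p - hfoot i).

Lemma leq_last_row (k : 'I_n) (q p : 'I_m) :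
  adj k q -> (q <= p)%N -> (k <= last_row p)%N.
Proof.
move=> kq qp; rewrite /last_row.
by apply: (leq_bigmax_cond (k, q)); rewrite /= qp kq.
Qed.

Lemma last_row_mono (p q : 'I_m) : (p <= q)%N -> (last_row p <= last_row q)%N.
Proof.
move=> pq; apply/bigmax_leqP => -[k r] /= /andP[rp kr].
exact: leq_last_row kr (leq_trans rp pq).
Qed.

Lemma hfoot_lt_vfoot (i : 'I_n) (p : 'I_m) :
  (hfoot i < vfoot p)%N = (i <= last_row p)%N.
Proof.
rewrite /hfoot /vfoot; have lt_pm := ltn_ord p.
apply/idP/idP => [|le_ip]; last nia.
by apply: contraTT; rewrite -ltnNge -leqNgt => lt_ip; nia.
Qed.

Lemma hfoot_neq_vfoot (i : 'I_n) (p : 'I_m) : hfoot i != vfoot p.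
Proof.
rewrite /hfoot /vfoot; have lt_pm := ltn_ord p; apply/eqP => E.
by have [le_ip | lt_pi] := leqP i (last_row p); nia.
Qed.

Lemma leq_hfoot (i j : 'I_n) : (hfoot i <= hfoot j)%N = (i <= j)%N.
Proof. exact: leq_pmul2l. Qed.

Lemma ltn_hfoot (i j : 'I_n) : (i < j)%N -> (hfoot i < hfoot j)%N.
Proof. by rewrite /hfoot ltn_pmul2l. Qed.

Lemma ltn_vfoot (p q : 'I_m) : (p < q)%N -> (vfoot p < vfoot q)%N.
Proof. by move=> pq; have := last_row_mono (ltnW pq); rewrite /vfoot; nia. Qed.

Lemma leq_vfoot (p q : 'I_m) : (vfoot p <= vfoot q)%N = (p <= q)%N.
Proof.
apply/idP/idP => [|pq]; first by apply: contraTT; rewrite -!ltnNge => /ltn_vfoot.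
by have := last_row_mono pq; rewrite /vfoot; nia.
Qed.

Lemma adj_layoutE :
  ~ has_P1 adj -> ~ has_P2 adj -> ~ has_P3 adj -> forall i p,
  adj i p <-> [/\ (hfoot i < vfoot p)%N, (vfoot p - hfoot i <= hlen i)%N
                & (vfoot p - hfoot i <= vlen p)%N].
Proof.
move=> noP1 noP2 noP3 i p; split=> [ip | [ip_lt le_h le_v]].
  split; first by rewrite hfoot_lt_vfoot; apply: leq_last_row ip (leqnn p).
    exact: (leq_bigmax_cond p).
  exact: (leq_bigmax_cond i).
apply/negPn/negP => nip.
have [q iq hlenE] : exists2 q, adj i q & hlen i = vfoot q - hfoot i.
  by apply: bigmax_witness; rewrite -/(hlen i); lia.
have [j jp vlenE] : exists2 j, adj j p & vlen p = vfoot p - hfoot j.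
  by apply: bigmax_witness; rewrite -/(vlen p); lia.
have pq : (p < q)%N.
  rewrite ltn_neqAle -leq_vfoot; apply/andP; split; last lia.
  by apply: contraNneq nip => /val_inj ->.
have ji : (j < i)%N.
  rewrite ltn_neqAle -leq_hfoot; apply/andP; split; last lia.
  by apply: contraNneq nip => /val_inj <-.
have ik : (i <= last_row p)%N by rewrite -hfoot_lt_vfoot.
have [[k r] /= /andP[rp kr] last_rowE] :=
  bigmax_witness (leq_ltn_trans (leq0n j) (leq_trans ji ik)).
rewrite [last_row p]last_rowE /= in ik.
by have [|[|]] := nonedge_pattern nip ji jp pq iq ik kr rp.
Qed.

Lemma patterns_free_stick_rep :
  ~ has_P1 adj -> ~ has_P2 adj -> ~ has_P3 adj -> stick_rep_respecting adj.
Proof.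
move=> noP1 noP2 noP3.
apply: (@stick_rep_of_nat_layout hfoot vfoot hlen vlen).
- exact: ltn_hfoot.
- exact: ltn_vfoot.
- exact: hfoot_neq_vfoot.
- exact: adj_layoutE.
Qed.

End StickRepresentation.

Theorem theorem2 (n m : nat) (adj : 'I_n -> 'I_m -> bool) :
  stick_rep_respecting adj <->
  (~ has_P1 adj /\ ~ has_P2 adj /\ ~ has_P3 adj).
Proof.
split; first exact: stick_rep_patterns_free.
by case=> noP1 [noP2 noP3]; exact: patterns_free_stick_rep.
Qed.
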